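(* Every matroid $M$, regarded as the set system of its independent sets, belongs to the class $\mathfrak{J}_+$. That is, all coefficients $j_k$ ($0\le k\le t_M$) of its $J$-polynomial $J_M(u)=\sum_k j_ku^k$ are nonnegative.
   Context: A set system $\Omega$ on a finite set $E$ is a nonempty collection of subsets of $E$ (its faces). Define: - $d_\Omega=\max\{\#S:S\in\Omega\}$; - $f_i$ is the number of faces of size $i$; - $F_\Omega(z)=\sum_{i=0}^d f_iz^i$. Factor $F_\Omega(z)=(1+z)^{d-t}\widetilde F_\Omega(z)$ with $\widetilde F_\Omega(-1)\ne0$, where $t=t_\Omega=\deg\widetilde F_\Omega$. The $J$-polynomial is $J_\Omega(u)=(-2)^t\widetilde F_\Omega\big(\frac{-1-u}{2}\big)=\sum_{k=0}^t j_ku^k$. The class $\mathfrak{J}_+$ consists of the set systems with $j_k\ge0$ for all $0\le k\le t_\Omega$. *)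

From mathcomp Require Import all_boot all_order all_algebra.
Set Implicit Arguments. Unset Strict Implicit. Unset Printing Implicit Defensive.
Import Order.TTheory GRing.Theory Num.Theory.
Local Open Scope ring_scope.

Definition set_system (T : finType) (Om : {set {set T}}) : Prop := Om != set0.

Definition is_matroid (T : finType) (I : {set {set T}}) : Prop :=
  [/\ set0 \in I,
      (forall A B : {set T}, B \in I -> A \subset B -> A \in I) &
      (forall A B : {set T}, A \in I -> B \in I -> #|A| < #|B| ->
         exists2 x, x \in B :\: A & x |: A \in I)]%N.

Definition dOm (T : finType) (Om : {set {set T}}) : nat := \max_(S in Om) #|S|.

Definition fcoef (T : finType) (Om : {set {set T}}) (i : nat) : nat :=
  #|[set S in Om | #|S| == i]|.

Definition FOm (T : finType) (Om : {set {set T}}) : {poly rat} :=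
  \sum_(i < (dOm Om).+1) (fcoef Om i)%:R *: 'X^i.

(* F = (1+z)^(d-t) * Ftilde with Ftilde(-1) != 0: the exponent d - t is the
   multiplicity of -1 as a root of F. *)
Definition Ftilde (T : finType) (Om : {set {set T}}) : {poly rat} :=
  FOm Om %/ ('X + 1) ^+ (mup (-1) (FOm Om)).

Definition tOm (T : finType) (Om : {set {set T}}) : nat := (size (Ftilde Om)).-1.

Definition JOm (T : finType) (Om : {set {set T}}) : {poly rat} :=
  (-2) ^+ tOm Om *: (Ftilde Om \Po ((-1 - 'X) / 2%:P)).

Definition in_Jplus (T : finType) (Om : {set {set T}}) : Prop :=
  forall k : nat, (k <= tOm Om)%N -> 0 <= (JOm Om)`_k.

(* Write G_r(M) := (-2)^r F_M((-1-u)/2) ([Jpoly r M]) for a matroid M of rank r,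
   so that -2z = u + 1 and -2(1 + z) = u - 1.  Deletion-contraction
   F_M = F_{M\e} + z F_{M/e} becomes G_r(M) = G_r(M\e) + (u+1) G_{r-1}(M/e), and a
   coloop f gives G_r(M) = (u-1) G_{r-1}(M/f).  Contracting the c coloops of M
   yields F_M = (1+z)^c F_{M'} with M' coloop-free, and J_M = G(M') as soon as
   F_{M'}(-1) <> 0.
   For coloop-free M one proves, by induction on the number of independent sets,
   that G(M) has nonnegative coefficients together with: for every e,
   G(M\e) = (u-1)^c P and G(M/e) = Q_c P + N with P, N >= 0, where
   Q_c = ((u+1)^c - (u-1)^c)/2 ([binom_odd c]) and Q_{c+1} = (u-1)^c + (u+1) Q_c.
   When M\e has a coloop f, then e and f are in series, (M\e)/f = (M/e)\f, and
   the claim for M/e at f gives the claim for M at e with c + 1.  Nonnegativity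
   of G(M') then forbids G(M')(1) = 0, i.e. F_{M'}(-1) = 0. *)

From mathcomp Require Import all_boot all_order all_algebra.
From mathcomp Require Import ring.
Set Implicit Arguments. Unset Strict Implicit. Unset Printing Implicit Defensive.
Import Order.TTheory GRing.Theory Num.Theory.
Local Open Scope ring_scope.

Section NonnegativeCoefficients.
Context {R : numDomainType}.
Implicit Types p q : {poly R}.

Definition nneg_coef p := forall i, 0 <= p`_i.

Lemma nneg_coef0 : nneg_coef 0.
Proof. by move=> i; rewrite coef0. Qed.

Lemma nneg_coef1 : nneg_coef 1.
Proof. by move=> i; rewrite coef1; case: (i == 0%N). Qed.

Lemma nneg_coefX : nneg_coef 'X.
Proof. by move=> i; rewrite coefX; case: (i == 1%N). Qed.

Lemma nneg_coefD p q : nneg_coef p -> nneg_coef q -> nneg_coef (p + q).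
Proof. by move=> hp hq i; rewrite coefD addr_ge0. Qed.

Lemma nneg_coefM p q : nneg_coef p -> nneg_coef q -> nneg_coef (p * q).
Proof. by move=> hp hq i; rewrite coefM sumr_ge0 // => j _; rewrite mulr_ge0. Qed.

Lemma nneg_coefXadd1 : nneg_coef ('X + 1).
Proof. exact: nneg_coefD nneg_coefX nneg_coef1. Qed.

Lemma nneg_coef_root_eq0 p (x : R) : nneg_coef p -> 0 < x -> root p x -> p = 0.
Proof.
move=> hp x_gt0 /rootP; rewrite horner_coef => /psumr_eq0P px0.
have {}px0 i : (i < size p)%N -> p`_i * x ^+ i = 0.
  move=> lt_i_p; apply: (px0 _ (Ordinal lt_i_p)) => // j _.
  exact: mulr_ge0 (hp j) (exprn_ge0 _ (ltW x_gt0)).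
apply/polyP => i; rewrite coef0.
have [/px0/eqP|] := ltnP i (size p); last exact: nth_default.
by rewrite mulf_eq0 expf_eq0 (gt_eqF x_gt0) andbF orbF => /eqP.
Qed.

End NonnegativeCoefficients.

Section BinomialParity.
Variable R : comNzRingType.

(* The two components are the odd- and even-index parts of the binomial
   expansion of ('X + 1)^c, i.e. ((X+1)^c -+ (X-1)^c) / 2. *)
Fixpoint binom_parity (c : nat) : {poly R} * {poly R} :=
  if c is c'.+1 then
    let p := binom_parity c' in ('X * p.1 + p.2, 'X * p.2 + p.1)
  else (0, 1).

Definition binom_odd c := (binom_parity c).1.

Lemma binom_parityE c :
  (binom_parity c).1 + (binom_parity c).2 = ('X + 1) ^+ c /\
  (binom_parity c).2 - (binom_parity c).1 = ('X - 1) ^+ c.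
Proof.
elim: c => [|c [sumE diffE]] /=; first by rewrite add0r subr0 !expr0.
by rewrite !exprS -sumE -diffE; split; ring.
Qed.

Lemma binom_odd0 : binom_odd 0 = 0.
Proof. by []. Qed.

Lemma binom_oddS c : binom_odd c.+1 = ('X - 1) ^+ c + ('X + 1) * binom_odd c.
Proof. by rewrite /binom_odd /=; have [_ <-] := binom_parityE c; ring. Qed.

End BinomialParity.

Arguments binom_odd {R}.

Lemma nneg_coef_binom_odd {R : numDomainType} c : nneg_coef (binom_odd c : {poly R}).
Proof.
suff [] : nneg_coef (binom_parity R c).1 /\ nneg_coef (binom_parity R c).2 by [].
elim: c => [|c [odd_ge0 even_ge0]] /=.
  by split; [exact: nneg_coef0 | exact: nneg_coef1].
by split; apply: nneg_coefD => //; apply: nneg_coefM => //; exact: nneg_coefX.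
Qed.

Section Minors.
Variable T : finType.
Implicit Types (I : {set {set T}}) (A B : {set T}) (e f : T) (r : nat).

Definition deletion e I := [set A in I | e \notin A].
Definition contraction e I := [set A in I | (e \notin A) && (e |: A \in I)].

Definition has_rank I r :=
  (forall A, A \in I -> #|A| <= r)%N /\ exists2 B, B \in I & #|B| = r.

(* Meant for [has_rank I r]: then [f] lies in every basis. *)
Definition coloop I r f := [forall B in I, (#|B| == r) ==> (f \in B)].
Definition coloop_free I r := [forall f, ~~ coloop I r f].

Lemma coloopP I r f :
  reflect (forall B, B \in I -> #|B| = r -> f \in B) (coloop I r f).
Proof.
apply: (iffP forall_inP) => [H B BI /eqP Br | H B BI]; first exact: implyP (H B BI) Br.
by apply/implyP => /eqP; apply: H.
Qed.

Lemma coloopPn I r f :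
  reflect (exists2 B, B \in I & (#|B| == r) && (f \notin B)) (~~ coloop I r f).
Proof.
rewrite negb_forall_in.
by apply: (iffP exists_inP) => [] [B BI fB]; exists B; rewrite // negb_imply in fB *.
Qed.

Lemma matroid_indepS I A B : is_matroid I -> A \in I -> B \subset A -> B \in I.
Proof. by case=> _ indepS _; apply: indepS. Qed.

Lemma matroid_extend I A B : is_matroid I -> A \in I -> B \in I -> (#|A| <= #|B|)%N ->
  exists2 A', A' \in I & [/\ A \subset A', A' \subset A :|: B & #|A'| = #|B|].
Proof.
move=> M; have [_ _ augment] := M.
have [n] := ubnP (#|B| - #|A|); elim: n A => // n IH A lt_n AI BI le_AB.
have [eq_AB | lt_AB] := eqVneq #|A| #|B|.
  by exists A => //; split; rewrite ?subsetUl.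
have {lt_AB le_AB}lt_AB : (#|A| < #|B|)%N by rewrite ltn_neqAle lt_AB.
have [x /setDP[xB xA] xAI] := augment A B AI BI lt_AB.
have card_xA : #|x |: A| = #|A|.+1 by rewrite cardsU1 xA.
have lt_n' : (#|B| - #|x |: A| < n)%N.
  by rewrite card_xA subnS prednK ?subn_gt0 // -ltnS.
have le_xAB : (#|x |: A| <= #|B|)%N by rewrite card_xA.
have [A' A'I [sxA sA' cardA']] := IH _ lt_n' xAI BI le_xAB.
exists A' => //; split=> //; first exact: subset_trans (subsetUr _ _) sxA.
by rewrite (subset_trans sA') // !subUset sub1set inE xB orbT subsetUl subsetUr.
Qed.

Lemma deletion_matroid I e : is_matroid I -> is_matroid (deletion e I).
Proof.
move=> [I0 indepS augment]; split.
- by rewrite !inE I0.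
- move=> A B; rewrite !inE => /andP[BI eB] sAB; rewrite (indepS A B) //=.
  by apply: contra eB => /(subsetP sAB).
move=> A B; rewrite !inE => /andP[AI eA] /andP[BI eB] lt_AB.
have [x /setDP[xB xA] xAI] := augment A B AI BI lt_AB.
exists x; first by rewrite inE xB xA.
by rewrite !inE xAI negb_or eA andbT; apply: contraNneq eB => ->.
Qed.

Lemma contraction_matroid I e :
  is_matroid I -> [set e] \in I -> is_matroid (contraction e I).
Proof.
move=> M eI; have [I0 indepS augment] := M; split.
- by rewrite !inE I0 setU0 eI.
- move=> A B; rewrite !inE => /andP[BI /andP[eB eBI]] sAB.
  rewrite (indepS A B) // (indepS _ _ eBI (setUS _ sAB)) andbT /=.
  by apply: contra eB => /(subsetP sAB).
move=> A B; rewrite !inE => /andP[AI /andP[eA eAI]] /andP[BI /andP[eB eBI]] lt_AB.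
have lt_eAB : (#|e |: A| < #|e |: B|)%N by rewrite !cardsU1 eA eB.
have [x] := augment _ _ eAI eBI lt_eAB.
rewrite !inE negb_or => /andP[/andP[xe xA] /orP[/eqP ex|xB]].
  by rewrite ex eqxx in xe.
rewrite setUCA => xeAI; exists x; first by rewrite inE xA.
by rewrite !inE negb_or eq_sym xe eA xeAI !andbT (matroid_indepS M xeAI) ?subsetUr.
Qed.

Lemma deletion_proper I e : [set e] \in I -> deletion e I \proper I.
Proof.
move=> eI; apply/properP; split; first by apply/subsetP => A; rewrite inE => /andP[].
by exists [set e]; rewrite // !inE eqxx andbF.
Qed.

Lemma contraction_proper I e : [set e] \in I -> contraction e I \proper I.
Proof.
move=> eI; apply/properP; split; first by apply/subsetP => A; rewrite inE => /andP[].
by exists [set e]; rewrite // !inE eqxx andbF.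
Qed.

Lemma has_rank_deletion I r e :
  has_rank I r -> ~~ coloop I r e -> has_rank (deletion e I) r.
Proof.
move=> [le_r _] /coloopPn[B BI /andP[/eqP Br eB]]; split.
  by move=> A; rewrite inE => /andP[/le_r].
by exists B; rewrite // inE BI.
Qed.

Lemma contraction_basis I r e B : is_matroid I -> has_rank I r -> [set e] \in I ->
  B \in I -> #|B| = r -> exists2 A, A \in contraction e I & #|A| = r.-1 /\ A \subset B.
Proof.
move=> M [le_r _] eI BI Br.
have le_eB : (#|[set e]| <= #|B|)%N by rewrite Br le_r.
have [A' A'I [eA' sA' cardA']] := matroid_extend M eI BI le_eB.
have {eA'}eA' : e \in A' by rewrite (subsetP eA') ?set11.
exists (A' :\ e).
  by rewrite !inE eqxx setD1K //= A'I (matroid_indepS M A'I) ?subD1set.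
split; first by move: (cardsD1 e A'); rewrite eA' cardA' Br add1n => ->.
apply/subsetP => x; rewrite !inE => /andP[xe /(subsetP sA')].
by rewrite !inE (negbTE xe).
Qed.

Lemma has_rank_contraction I r e :
  is_matroid I -> has_rank I r -> [set e] \in I -> has_rank (contraction e I) r.-1.
Proof.
move=> M R eI; have [le_r [B BI Br]] := R; split.
  move=> A; rewrite !inE => /andP[_ /andP[eA /le_r]].
  by rewrite cardsU1 eA add1n => /(leq_sub2r 1); rewrite !subn1.
by have [A AK [cardA _]] := contraction_basis M R eI BI Br; exists A.
Qed.

Lemma coloop_free_contraction I r e : is_matroid I -> has_rank I r ->
  coloop_free I r -> [set e] \in I -> coloop_free (contraction e I) r.-1.
Proof.
move=> M R free eI; apply/forallP => x; have [_ [B0 B0I B0r]] := R.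
have [xe|/negPf xe] := eqVneq x e.
  have [A AK [cardA _]] := contraction_basis M R eI B0I B0r.
  apply/coloopPn; exists A; rewrite // cardA eqxx xe /=.
  by move: AK; rewrite inE => /and3P[].
have /coloopPn[B BI /andP[/eqP Br xB]] := forallP free x.
have [A AK [cardA sAB]] := contraction_basis M R eI BI Br.
apply/coloopPn; exists A; rewrite // cardA eqxx /=.
by apply: contra xB => /(subsetP sAB).
Qed.

Lemma coloop_setU1 I r f A : is_matroid I -> has_rank I r -> coloop I r f ->
  A \in I -> f |: A \in I.
Proof.
move=> M [le_r [B BI Br]] /coloopP f_coloop AI.
have le_AB : (#|A| <= #|B|)%N by rewrite Br le_r.
have [A' A'I [sAA' _ cardA']] := matroid_extend M AI BI le_AB.
apply: (matroid_indepS M A'I); rewrite subUset sAA' andbT sub1set.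
by apply: f_coloop; rewrite ?cardA'.
Qed.

Lemma deletion_coloop I r f : is_matroid I -> has_rank I r -> coloop I r f ->
  deletion f I = contraction f I.
Proof.
move=> M R f_coloop; apply/setP => A; rewrite !inE.
by case: (boolP (A \in I)) => //= AI; rewrite (coloop_setU1 M R f_coloop AI) andbT.
Qed.

(* Otherwise, augmenting [A1 :\ f], for a basis [A1] of [deletion e I] containing
   [A], from a basis of [I] avoiding [f] would give a basis of [deletion e I]
   avoiding [f]. *)
Lemma series_setU1 I r e f A : is_matroid I -> has_rank I r -> coloop_free I r ->
  coloop (deletion e I) r f -> A \in I -> e \notin A -> f \notin A -> e |: A \in I.
Proof.
move=> M R free /coloopP f_coloop AI eA fA; apply/negPn/negP => eAnI.
have MD := deletion_matroid e M.
have [le_r [B BD Br]] := has_rank_deletion R (forallP free e).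
have AD : A \in deletion e I by rewrite inE AI eA.
have le_AB : (#|A| <= #|B|)%N by rewrite Br le_r.
have [A1 A1D [sAA1 _ cardA1]] := matroid_extend MD AD BD le_AB.
have fA1 : f \in A1 by apply: f_coloop => //; rewrite cardA1.
move: A1D; rewrite inE => /andP[A1I eA1].
set A2 := A1 :\ f.
have A2I : A2 \in I by apply: matroid_indepS M A1I (subD1set _ _).
have card_A2 : #|A2|.+1 = r by rewrite -Br -cardA1 (cardsD1 f A1) fA1.
have eA2nI : e |: A2 \notin I.
  apply: contra eAnI => eA2I; apply: matroid_indepS M eA2I (setUS _ _).
  apply/subsetP => y yA; rewrite !inE (subsetP sAA1) // andbT.
  by apply: contraNneq fA => <-.
have /coloopPn[B0 B0I /andP[/eqP B0r fB0]] := forallP free f.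
have [_ _ augment] := M.
have lt_A2B0 : (#|A2| < #|B0|)%N by rewrite B0r -card_A2.
have [x /setDP[xB0 xA2] xA2I] := augment _ _ A2I B0I lt_A2B0.
have xe : x != e by apply: contraNneq eA2nI => <-.
have xA2D : x |: A2 \in deletion e I.
  by rewrite !inE xA2I negb_or eq_sym xe negb_and eA1 orbT.
have := f_coloop _ xA2D; rewrite cardsU1 xA2 add1n card_A2 => /(_ erefl).
by rewrite !inE eqxx /= orbF => /eqP fx; rewrite fx xB0 in fB0.
Qed.

Lemma contraction_deletion_series I r e f : is_matroid I -> has_rank I r ->
  coloop_free I r -> coloop (deletion e I) r f ->
  deletion f (contraction e I) = contraction f (deletion e I).
Proof.
move=> M R free f_coloop.
have RD := has_rank_deletion R (forallP free e); have [_ [B BD Br]] := RD.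
have fB := coloopP _ _ _ f_coloop B BD Br.
have ef : e != f by apply: contraTneq BD => ->; rewrite inE fB andbF.
apply/setP => A; rewrite !inE.
case: (boolP (A \in I)) => //= AI; case: (boolP (e \in A)) => //= eA.
case: (boolP (f \in A)) => //= fA; first by rewrite andbF.
have AD : A \in deletion e I by rewrite inE AI eA.
have /setIdP[fAI _] := coloop_setU1 (deletion_matroid e M) RD f_coloop AD.
by rewrite (series_setU1 M R free f_coloop) // fAI orbF ef.
Qed.

End Minors.

Definition Jsub : {poly rat} := (-1 - 'X) / 2%:P.

Lemma scale_Jsub : (-2) *: Jsub = 'X + 1.
Proof.
rewrite /Jsub polyCV mulrC mul_polyC scalerA mulNr divff ?pnatr_eq0 //.
by rewrite scaleN1r opprB opprK addrC.
Qed.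

Lemma scale_Jsub_add1 : (-2) *: (1 + Jsub) = 'X - 1.
Proof.
by rewrite scalerDr scale_Jsub -mul_polyC mulr1 polyCN polyC_natr; ring.
Qed.

Lemma horner_Jsub1 : Jsub.[1] = -1.
Proof.
apply: (@mulfI _ (-2)); first by rewrite oppr_eq0 pnatr_eq0.
by rewrite -hornerZ scale_Jsub hornerD hornerX hornerC; ring.
Qed.

Lemma size_Jsub : size Jsub = 2.
Proof.
rewrite -(size_scale _ (_ : -2 != 0)) ?oppr_eq0 ?pnatr_eq0 // scale_Jsub.
by rewrite -polyC1 size_XaddC.
Qed.

Section IndependencePolynomial.
Variable T : finType.
Implicit Types (I : {set {set T}}) (A : {set T}) (e f : T) (r : nat).

Definition indep_poly I : {poly rat} := \sum_(A in I) 'X^#|A|.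

Definition Jpoly r I := (-2) ^+ r *: (indep_poly I \Po Jsub).

Lemma coef_indep_poly I k : (indep_poly I)`_k = #|[set A in I | #|A| == k]|%:R.
Proof.
rewrite coef_sum -sumr_const [RHS](eq_bigl (fun A => (A \in I) && (#|A| == k))) => [|A].
  rewrite [RHS]big_mkcondr; apply: eq_bigr => A _.
  by rewrite coefXn eq_sym; case: (_ == _).
by rewrite inE.
Qed.

Lemma FOm_indep_poly I : FOm I = indep_poly I.
Proof.
apply/polyP => k; rewrite coef_indep_poly /FOm coef_sum.
under eq_bigr do rewrite coefZ coefXn.
have [le_k_d | lt_d_k] := ltnP k (dOm I).+1.
  rewrite (bigD1 (Ordinal le_k_d)) //= eqxx mulr1 big1 ?addr0 // => i neq_ik.
  suff /negPf-> : k != i by rewrite mulr0.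
  by apply: contra neq_ik => /eqP ki; apply/eqP/val_inj.
rewrite big1 => [|i _]; last by rewrite gtn_eqF ?mulr0 // (leq_trans (ltn_ord i)).
suff -> : [set A in I | #|A| == k] = set0 by rewrite cards0.
apply/setP => A; rewrite !inE; apply/negP => /andP[AI /eqP cardA].
by move: lt_d_k; rewrite -cardA ltnNge (leq_bigmax_cond _ AI).
Qed.

Lemma size_indep_poly I r : has_rank I r -> size (indep_poly I) = r.+1.
Proof.
move=> [le_r [B BI Br]]; apply/eqP; rewrite eqn_leq; apply/andP; split.
  apply/leq_sizeP => j lt_r_j; rewrite coef_indep_poly.
  suff -> : [set A in I | #|A| == j] = set0 by rewrite cards0.
  apply/setP => A; rewrite !inE; apply/negP => /andP[/le_r + /eqP cardA].
  by rewrite cardA leqNgt lt_r_j.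
rewrite ltnNge; apply/negP => /leq_sizeP /(_ r (leqnn r)) /eqP.
rewrite coef_indep_poly pnatr_eq0 cards_eq0 => /eqP/setP/(_ B).
by rewrite !inE BI Br eqxx.
Qed.

Lemma indep_poly0 : indep_poly set0 = 0.
Proof. by rewrite /indep_poly big_pred0 // => A; rewrite inE. Qed.

Lemma indep_poly_deletion_contraction I e : is_matroid I ->
  indep_poly I = indep_poly (deletion e I) + 'X * indep_poly (contraction e I).
Proof.
move=> M; rewrite /indep_poly (bigID (fun A => e \in A)) /= addrC; congr (_ + _).
  by apply: eq_bigl => A; rewrite !inE.
rewrite mulr_sumr (reindex_onto (fun A => e |: A) (fun A => A :\ e)) /=; last first.
  by move=> A /andP[_ eA]; rewrite setD1K.
apply: eq_big => A.
  rewrite !inE eqxx /=; have [eA | eA] /= := boolP (e \in A).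
    by rewrite andbF; apply/negbTE/andP => -[_ /eqP eAA]; rewrite -eAA !inE eqxx in eA.
  rewrite setU1K // eqxx !andbT.
  have [eAI|] := boolP (e |: A \in I); last by rewrite andbF.
  by rewrite (matroid_indepS M eAI (subsetUr _ _)).
move=> /andP[_ /eqP eAA]; have eA : e \notin A by rewrite -eAA !inE eqxx.
by rewrite -exprS cardsU1 eA.
Qed.

Lemma Jpoly0 r : Jpoly r set0 = 0.
Proof. by rewrite /Jpoly indep_poly0 comp_poly0 scaler0. Qed.

Lemma Jpoly_deletion_contraction I r e : is_matroid I ->
  (forall A, A \in I -> #|A| <= r)%N ->
  Jpoly r I = Jpoly r (deletion e I) + ('X + 1) * Jpoly r.-1 (contraction e I).
Proof.
move=> M le_r; case: r le_r => [|r] le_r.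
  have K0 : contraction e I = set0.
    apply/setP => A; rewrite !inE; apply/negP => /andP[_ /andP[eA /le_r]].
    by rewrite cardsU1 eA.
  rewrite K0 Jpoly0 mulr0 addr0 /Jpoly (indep_poly_deletion_contraction e M).
  by rewrite K0 indep_poly0 mulr0 addr0.
rewrite /Jpoly {1}(indep_poly_deletion_contraction e M) comp_polyD comp_polyM.
rewrite comp_polyX scalerDr; congr (_ + _).
by rewrite exprS mulrC -scalerA scalerAl scale_Jsub scalerAr.
Qed.

Lemma Jpoly_coloop I r f : is_matroid I -> has_rank I r -> coloop I r f ->
  Jpoly r I = ('X - 1) * Jpoly r.-1 (contraction f I).
Proof.
move=> M R f_coloop; have [_ [B BI Br]] := R.
case: r R f_coloop Br => [|r] R f_coloop Br.
  have := coloopP _ _ _ f_coloop B BI Br.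
  by move/eqP: Br; rewrite cards_eq0 => /eqP ->; rewrite inE.
rewrite /Jpoly (indep_poly_deletion_contraction f M) (deletion_coloop M R f_coloop).
rewrite -{1}[indep_poly _]mul1r -mulrDl comp_polyM comp_polyD comp_polyC comp_polyX.
by rewrite exprS -scalerA scalerAr scalerAl scale_Jsub_add1.
Qed.

End IndependencePolynomial.

Section ColoopFree.
Variable T : finType.
Implicit Types (I J : {set {set T}}) (A : {set T}) (e f : T) (r s : nat).

(* The strengthened induction hypothesis: with [binom_oddS] it turns
   [Jpoly_deletion_contraction] into [Jpoly r I = binom_odd c.+1 * P + ('X + 1) * N]. *)
Definition minor_split I r e := exists c P N,
  [/\ nneg_coef P, nneg_coef N, Jpoly r (deletion e I) = ('X - 1) ^+ c * P
    & Jpoly r.-1 (contraction e I) = binom_odd c * P + N].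

Lemma nneg_coef_Jpoly_split I r e :
  is_matroid I -> has_rank I r -> minor_split I r e -> nneg_coef (Jpoly r I).
Proof.
move=> M [le_r _] [c [P [N [P_ge0 N_ge0 JD JK]]]].
rewrite (Jpoly_deletion_contraction e M le_r) JD JK.
have -> : ('X - 1) ^+ c * P + ('X + 1) * (binom_odd c * P + N) =
          binom_odd c.+1 * P + ('X + 1) * N by rewrite binom_oddS; ring.
exact: nneg_coefD (nneg_coefM (nneg_coef_binom_odd _) P_ge0)
                  (nneg_coefM nneg_coefXadd1 N_ge0).
Qed.

Lemma minor_split_loop I r e : is_matroid I -> [set e] \notin I ->
  nneg_coef (Jpoly r I) -> minor_split I r e.
Proof.
move=> M eI J_ge0; exists 0%N, (Jpoly r I), 0; split.
- exact: J_ge0.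
- exact: nneg_coef0.
- rewrite expr0 mul1r; congr Jpoly; apply/setP => A; rewrite inE andb_idr // => AI.
  by apply: contra eI => eA; apply: matroid_indepS M AI _; rewrite sub1set.
rewrite binom_odd0 mul0r add0r (_ : contraction e I = set0) ?Jpoly0 //.
apply/setP => A; rewrite !inE; apply/negP => /and3P[_ _ eAI].
by move: eI; rewrite (matroid_indepS M eAI) // subsetUl.
Qed.

Lemma minor_split_nonloop I r e :
  (forall J s, J \proper I -> is_matroid J -> has_rank J s -> coloop_free J s ->
     nneg_coef (Jpoly s J) /\ forall f, minor_split J s f) ->
  is_matroid I -> has_rank I r -> coloop_free I r -> [set e] \in I -> minor_split I r e.
Proof.
move=> IH M R free eI.
have MK := contraction_matroid M eI; have RK := has_rank_contraction M R eI.
have [JK_ge0 splitK] :=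
  IH _ _ (contraction_proper eI) MK RK (coloop_free_contraction M R free eI).
have MD := deletion_matroid e M; have RD := has_rank_deletion R (forallP free e).
have [freeD | /forallPn[f /negPn f_coloop]] := boolP (coloop_free (deletion e I) r).
  have [JD_ge0 _] := IH _ _ (deletion_proper eI) MD RD freeD.
  exists 0%N, (Jpoly r (deletion e I)), (Jpoly r.-1 (contraction e I)).
  by rewrite expr0 mul1r binom_odd0 mul0r add0r.
have [c [P [N [P_ge0 N_ge0 JKD JKK]]]] := splitK f.
exists c.+1, P, (('X + 1) * N); split=> //.
- exact: nneg_coefM nneg_coefXadd1 N_ge0.
- rewrite (Jpoly_coloop MD RD f_coloop).
  by rewrite -(contraction_deletion_series M R free f_coloop) JKD exprS mulrA.
rewrite (Jpoly_deletion_contraction f MK RK.1) JKD JKK binom_oddS; ring.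
Qed.

Lemma coloop_free_Jpoly I r : is_matroid I -> has_rank I r -> coloop_free I r ->
  nneg_coef (Jpoly r I) /\ forall e, minor_split I r e.
Proof.
have [n] := ubnP #|I|; elim: n I r => // n IH I r lt_I_n M R free.
have split_nonloop e : [set e] \in I -> minor_split I r e.
  apply: minor_split_nonloop => // J s ltJI; apply: IH.
  exact: leq_trans (proper_card ltJI) _.
have J_ge0 : nneg_coef (Jpoly r I).
  have [e eI | loops] := pickP (fun e => [set e] \in I).
    exact: nneg_coef_Jpoly_split M R (split_nonloop e eI).
  have I1 : I = [set set0].
    apply/setP => A; rewrite inE; apply/idP/eqP => [AI|->]; last by case: M.
    apply/setP => x; rewrite inE; apply/negP => xA.
    by have := loops x; rewrite /= (matroid_indepS M AI) // sub1set.
  have [_ [B]] := R; rewrite I1 inE => /eqP-> <-.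
  rewrite /Jpoly /indep_poly big_set1 cards0 expr0 scale1r comp_polyC.
  exact: nneg_coef1.
split=> // e; have [/split_nonloop // | eI] := boolP ([set e] \in I).
exact: minor_split_loop.
Qed.

End ColoopFree.

Section Reduction.
Variable T : finType.
Implicit Types (I : {set {set T}}) (r : nat).

Lemma contract_coloops I r : is_matroid I -> has_rank I r ->
  exists c I', [/\ is_matroid I', has_rank I' (r - c), coloop_free I' (r - c)
    & indep_poly I = ('X + 1) ^+ c * indep_poly I'].
Proof.
elim: r I => [|r IH] I M R.
  exists 0%N, I; split; rewrite ?expr0 ?mul1r //.
  apply/forallP => f; apply/coloopPn; exists set0; rewrite ?cards0 ?inE //.
  by case: M.
have [free | /forallPn[f /negPn f_coloop]] := boolP (coloop_free I r.+1).
  by exists 0%N, I; rewrite subn0 expr0 mul1r.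
have [_ [B BI Br]] := R.
have fI : [set f] \in I.
  by apply: (matroid_indepS M BI); rewrite sub1set (coloopP _ _ _ f_coloop B BI Br).
have [c [I' [M' R' free' EI']]] :=
  IH _ (contraction_matroid M fI) (has_rank_contraction M R fI).
exists c.+1, I'; rewrite subSS; split=> //.
rewrite (indep_poly_deletion_contraction f M) (deletion_coloop M R f_coloop) EI'.
by rewrite exprS; ring.
Qed.

Lemma set_system_has_rank I : set_system I -> has_rank I (dOm I).
Proof.
move=> /set0Pn[A AI]; split=> [B BI|]; first exact: leq_bigmax_cond.
have [|B BI dB] := eq_bigmax_cond (fun S : {set T} => #|S|) (_ : 0 < #|I|)%N.
  by apply/card_gt0P; exists A.
by exists B.
Qed.

Lemma coloop_free_indep_poly_Nroot I r : is_matroid I -> has_rank I r ->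
  coloop_free I r -> ~~ root (indep_poly I) (-1).
Proof.
move=> M R free; apply/negP => /rootP F0.
have J1 : root (Jpoly r I) 1.
  by rewrite /root /Jpoly hornerZ horner_comp horner_Jsub1 F0 mulr0.
have /eqP := nneg_coef_root_eq0 (coloop_free_Jpoly M R free).1 ltr01 J1.
rewrite scaler_eq0 expf_eq0 oppr_eq0 pnatr_eq0 andbF /= comp_poly2_eq0 ?size_Jsub //.
by rewrite -size_poly_eq0 (size_indep_poly R).
Qed.

Lemma Ftilde_factor I c p :
  FOm I = ('X + 1) ^+ c * p -> ~~ root p (-1) -> Ftilde I = p.
Proof.
move=> F_eq p_Nroot; have X1E : 'X + 1 = 'X - (-1)%:P :> {poly rat}.
  by rewrite polyCN opprK.
rewrite /Ftilde F_eq mupMl // X1E mup_XsubCX eqxx mulrC mulpK //.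
by rewrite expf_neq0 // -size_poly_eq0 size_XsubC.
Qed.

End Reduction.

Theorem theorem6p4 (T : finType) (I : {set {set T}}) :
  is_matroid I -> in_Jplus I.
Proof.
move=> M; have [I0 _ _] := M.
have R : has_rank I (dOm I) by apply: set_system_has_rank; apply/set0Pn; exists set0.
have [c [I' [M' R' free' EI']]] := contract_coloops M R.
have Ftilde_I : Ftilde I = indep_poly I'.
  apply: (Ftilde_factor (c := c)) (coloop_free_indep_poly_Nroot M' R' free').
  by rewrite FOm_indep_poly EI'.
move=> k _; rewrite /JOm /tOm Ftilde_I (size_indep_poly R').
exact: (coloop_free_Jpoly M' R' free').1.
Qed.
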